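(* Assume the following hypothesis: there is a constant $A$ such that, for all sufficiently large $n$, every big irreducible representation $\lambda$ of $S_n$ satisfies $\left|\chi_\lambda(\pi)/d_\lambda\right| \le A^{t(\pi)} n^{-t(\pi)/2}$ for all $\pi\in S_n$. Then all big irreducible representations $\lambda$ of $S_n$ are $O(\sqrt{n})$-smooth, i.e. there is a constant $C$ such that for all sufficiently large $n$ and every big irrep $\lambda$ of $S_n$, $\sum_{\pi\in S_n}\left|\chi_\lambda(\pi)/d_\lambda\right|^4 \le C\sqrt{n}$.
   Context: An irreducible representation $\lambda$ of $S_n$ with character $\chi_\lambda$ and dimension $d_\lambda$ is called big if $d_\lambda > e^{-\sqrt{n}\log n}\sqrt{n!}$ (natural logarithm). For $\pi\in S_n$, $t(\pi)$ is the minimum number of transpositions whose product is $\pi$ (equivalently the number of non-fixed points minus the number of nontrivial cycles). *)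

From HB Require Import structures.
From mathcomp Require Import all_boot all_order all_algebra all_fingroup all_field all_character.
From Stdlib Require Reals.
Set Implicit Arguments. Unset Strict Implicit. Unset Printing Implicit Defensive.
Import Order.TTheory GRing.Theory Num.Theory.
Local Open Scope ring_scope.

Definition Sn (n : nat) : {group 'S_n} := [set: 'S_n]%G.

(* Dimension d_lambda of the irreducible representation indexed by i:
   the degree 'chi_i 1, which is a natural number (Cnat), read as a nat. *)
Definition irr_dim (n : nat) (i : Iirr (Sn n)) : nat :=
  Num.truncn ('chi[Sn n]_i 1%g).

Definition normchar (n : nat) (i : Iirr (Sn n)) (p : 'S_n) : algC :=
  'chi[Sn n]_i p / 'chi[Sn n]_i 1%g.

Definition big_irr (n : nat) (i : Iirr (Sn n)) : Prop :=
  Rdefinitions.Rlt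
    (Rdefinitions.Rmult
       (Rtrigo_def.exp (Rdefinitions.Ropp (Rdefinitions.Rmult (R_sqrt.sqrt (Raxioms.INR n)) (Rpower.ln (Raxioms.INR n)))))
       (R_sqrt.sqrt (Raxioms.INR (n `!))))
    (Raxioms.INR (irr_dim i)).

Definition tcost (n : nat) (p : 'S_n) : nat :=
  (#|[set x : 'I_n | p x != x]| - #|[set c in porbits p | 1 < #|c|]|)%N.

From mathcomp Require Import all_boot all_order all_algebra all_fingroup all_field all_character.
From mathcomp Require Import zify ring lra.
Set Implicit Arguments. Unset Strict Implicit. Unset Printing Implicit Defensive.
Import Order.TTheory GRing.Theory Num.Theory.
Local Open Scope ring_scope.

(* Raising the hypothesis to the fourth power bounds the term of [pi] by
   [y ^ t(pi)] with [y = |A|^4 / n^2].  As [t(pi)] is [n] minus the number of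
   cycles of [pi], the sum of [y ^ t(pi)] over [S_n] is the cycle generating
   function [prod_(i < n) (1 + i y)], which is at most [(1 + |A|^4 / n) ^ n],
   hence bounded independently of [n]. *)

Section TranspLength.
Variable T : finType.
Implicit Types (s p q : {perm T}) (S : {set T}).

Definition transp_length s := (#|T| - #|porbits s|)%N.

Lemma porbit_fix s x : s x = x -> porbit s x = [set x].
Proof.
move=> sx; apply/setP=> y; rewrite inE; apply/porbitP/eqP => [[i ->]|->].
  by rewrite permX iter_fix.
by exists 0%N; rewrite expg0 perm1.
Qed.

Lemma card_porbit_le1 s x : (#|porbit s x| <= 1)%N = (s x == x).
Proof.
apply/idP/eqP => [/card_le1_eqP le1|/porbit_fix->]; last by rewrite cards1.
by apply/esym/le1; [rewrite -{1}[s]expg1 mem_porbit | exact: porbit_id].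
Qed.

Lemma card_porbits_le s : (#|porbits s| <= #|T|)%N.
Proof. exact: leq_imset_card. Qed.

Lemma transp_length1 : transp_length 1 = 0%N.
Proof.
rewrite /transp_length /porbits (eq_imset (g := set1)) => [|x]; last by rewrite porbit_fix ?perm1.
by rewrite card_imset ?subnn //; apply: set1_inj.
Qed.

Lemma transp_length_tpermM s x y : s x = x ->
  transp_length (tperm x y * s)%g = (transp_length s + (y != x))%N.
Proof.
move=> sx; have := porbits_mul_tperm s x y.
rewrite porbit_sym porbit_fix // inE eq_sym /transp_length.
by have := card_porbits_le s; have := card_porbits_le (tperm x y * s)%g; case: eqP => _ /=; lia.
Qed.

Lemma transp_lengthE s :
  (#|[set x | s x != x]| - #|[set c in porbits s | 1 < #|c|]|)%N = transp_length s.
Proof.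
set F := [set x | s x == x]; set B := [set c : {set T} | 1 < #|c|]%N.
have moved : #|[set x | s x != x]| = (#|T| - #|F|)%N.
  rewrite -(cardsC F) [~: F](_ : _ = [set x | s x != x]) ?addKn //.
  by apply/setP => x; rewrite !inE.
have long : [set c in porbits s | 1 < #|c|]%N = porbits s :&: B.
  by apply/setP => c; rewrite !inE.
have short : porbits s :\: B = porbit s @: F.
  apply/setP => c; rewrite !inE -leqNgt.
  apply/andP/imsetP => [[le1 /imsetP[x _ cE]]|[x]].
    by exists x; rewrite // inE -card_porbit_le1 -cE.
  by rewrite inE -card_porbit_le1 => le1 ->; split; last exact: imset_f.
have card_short : #|porbit s @: F| = #|F|.
  apply: card_in_imset => x y; rewrite !inE => /eqP sx /eqP sy.
  by rewrite !porbit_fix // => /set1_inj.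
have := cardsID B (porbits s); rewrite short card_short -long moved /transp_length.
by have := card_porbits_le s; lia.
Qed.

Lemma perm_on_tpermM_fiber S a j p : a \in S -> j \in S ->
  (perm_on S p && ((p^-1)%g a == j)) = perm_on (S :\ a) (tperm a j * p)%g.
Proof.
move=> aS jS; have tS : perm_on S (tperm a j).
  by apply: subset_trans (tperm_on a j) _; apply/subsetP => x; rewrite !inE => /orP[]/eqP->.
have fix_a : ((p^-1)%g a == j) = ((tperm a j * p)%g a == a).
  by rewrite permM tpermL (canF_eq (permK p)) eq_sym.
rewrite fix_a; apply/andP/idP => [[pS qa]|qS].
  have qS : perm_on S (tperm a j * p)%g by apply: perm_onM.
  apply/subsetP => x; rewrite !inE => qx; rewrite (subsetP qS x) ?inE // andbT.
  by apply: contraNneq qx => ->; apply: qa.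
have qa : (tperm a j * p)%g a == a by rewrite (out_perm qS) // !inE eqxx.
split=> //; rewrite -(tpermKg a j p); apply: perm_onM => //.
by apply: subset_trans qS _; apply: subsetDl.
Qed.

Lemma sum_perm_on_transp_length (R : comPzRingType) (y : R) S :
  \sum_(p | perm_on S p) y ^+ transp_length p = \prod_(i < #|S|) (1 + i%:R * y).
Proof.
move cS: #|S| => m; elim: m S cS => [|m IH] S cS.
  rewrite big_ord0 (big_pred1 1%g) ?transp_length1 // => p /=.
  by apply/idP/eqP => [pS|->]; [apply: perm_on_id pS _; rewrite cS | exact: perm_on1].
have [a aS] : exists a, a \in S by apply/set0Pn; rewrite -card_gt0 cS.
have cSa : #|S :\ a| = m by move: cS; rewrite (cardsD1 a S) aS => -[].
rewrite big_ord_recr /= -(IH _ cSa) {IH}.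
(* Sort [p] by [j = p^-1 a]: then [p = tperm a j * q] with [q] fixing [a]. *)
rewrite (partition_big (fun p => (p^-1)%g a) (mem S)) => [|p pS]; last first.
  by rewrite /= (perm_closed _ (perm_onV pS)).
have fiber j : j \in S -> \sum_(p | perm_on S p && ((p^-1)%g a == j)) y ^+ transp_length p
    = y ^+ (j != a) * \sum_(q | perm_on (S :\ a) q) y ^+ transp_length q.
  move=> jS; rewrite mulr_sumr.
  rewrite (reindex_onto (mul (tperm a j)) (mul (tperm a j))) => [|p _]; last exact: tpermKg.
  apply: eq_big => [q|q /andP[/andP[_ /eqP qa] _]].
    by rewrite perm_on_tpermM_fiber ?tpermKg ?eqxx ?andbT.
  rewrite transp_length_tpermM ?exprD 1?mulrC //.
  by have := permKV (tperm a j * q)%g a; rewrite qa permM tpermR.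
rewrite (eq_bigr _ fiber) (bigD1 a) //= eqxx mul1r mulrDr mulr1; congr (_ + _).
rewrite -mulr_suml mulrC; congr (_ * _).
rewrite (eq_bigr (fun=> y)) => [|j /andP[_ ->]]; last exact: expr1.
rewrite sumr_const -cSa mulr_natl; congr (_ *+ _).
by apply: eq_card => j; rewrite !inE andbC.
Qed.

End TranspLength.

Section PowerBounds.
Variable R : realFieldType.

Lemma bernoulli_ler (e : R) m : -1 <= e -> 1 + m%:R * e <= (1 + e) ^+ m.
Proof.
move=> e_ge; have e1_ge0 : 0 <= 1 + e by lra.
elim: m => [|m IH]; first by rewrite mul0r addr0 expr0.
have := ler_wpM2l e1_ge0 IH; rewrite -exprS.
have : 0 <= m%:R * e * e by rewrite -mulrA mulr_ge0 // -expr2 sqr_ge0.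
rewrite -natr1; nra.
Qed.

Lemma expr_1Dhalfinv_le2 n : (0 < n)%N -> (1 + (2 * n%:R)^-1) ^+ n <= 2 :> R.
Proof.
move=> n_gt0; set e : R := (2 * n%:R)^-1.
have nR : 1 <= n%:R :> R by rewrite ler1n.
have e_ge0 : 0 <= e by rewrite invr_ge0; lra.
have e_le1 : e <= 1 by rewrite invf_le1; lra.
have ne : n%:R * e = 2^-1 by rewrite /e invfM mulrCA divff ?mulr1 // gt_eqF //; lra.
have low : 2^-1 <= (1 - e) ^+ n.
  have me_ge : -1 <= - e by lra.
  by have := bernoulli_ler n me_ge; rewrite mulrN ne; lra.
have prod_le1 : (1 + e) ^+ n * (1 - e) ^+ n <= 1 by rewrite -exprMn exprn_ile1 //; nra.
have := ler_wpM2l (exprn_ge0 n (_ : 0 <= 1 + e)) low; lra.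
Qed.

Lemma expr_1Ddiv_le_pow4 n K : (0 < n)%N -> (1 + K%:R / n%:R) ^+ n <= (4 ^ K)%:R :> R.
Proof.
move=> n_gt0; set e : R := (2 * n%:R)^-1.
have nR : 0 < n%:R :> R by rewrite ltr0n.
have e1_ge0 : 0 <= 1 + e by rewrite addr_ge0 // invr_ge0; lra.
have base : 1 + K%:R / n%:R <= (1 + e) ^+ (2 * K).
  have -> : K%:R / n%:R = (2 * K)%:R * e by rewrite natrM /e invfM; field; rewrite gt_eqF.
  by apply: bernoulli_ler; lra.
have base_ge0 : 0 <= 1 + K%:R / n%:R :> R by rewrite addr_ge0 ?divr_ge0 // ltW.
apply: le_trans (lerXn2r n _ _ base) _; rewrite ?nnegrE ?exprn_ge0 //.
rewrite -exprM mulnC exprM; apply: le_trans (_ : 2 ^+ (2 * K) <= _).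
  by apply: lerXn2r; rewrite ?nnegrE ?exprn_ge0 ?expr_1Dhalfinv_le2.
by rewrite exprM -!natrX.
Qed.

End PowerBounds.

Lemma prod_1DnatM_le (R : numDomainType) (y : R) n : 0 <= y ->
  \prod_(i < n) (1 + i%:R * y) <= (1 + n%:R * y) ^+ n.
Proof.
move=> y_ge0; rewrite -[in leRHS](card_ord n) -prodr_const.
apply: ler_prod => i _; rewrite addr_ge0 ?mulr_ge0 //= lerD2l card_ord.
by rewrite ler_wpM2r // ler_nat ltnW.
Qed.

Lemma prod_1DnatM_div_le_pow4 (F : numFieldType) n K : (0 < n)%N ->
  \prod_(i < n) (1 + i%:R * (K%:R / n%:R ^+ 2)) <= (4 ^ K)%:R :> F.
Proof.
move=> n_gt0; have nF : 0 < n%:R :> F by rewrite ltr0n.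
have y_ge0 : 0 <= K%:R / n%:R ^+ 2 :> F by rewrite divr_ge0 ?ler0n ?exprn_ge0 ?ltW.
apply: le_trans (prod_1DnatM_le n y_ge0) _.
have -> : n%:R * (K%:R / n%:R ^+ 2) = K%:R / n%:R :> F by field; rewrite gt_eqF.
have := expr_1Ddiv_le_pow4 rat K n_gt0.
by rewrite -(ler_rat F) rmorphXn rmorphD rmorph1 fmorph_div !rmorph_nat.
Qed.

Lemma expr4_le_of_le (F : numFieldType) (x A s : F) t : 0 <= x -> 0 <= s ->
  x <= A ^+ t * s ^- t -> x ^+ 4 <= (`|A| ^+ 4 / s ^+ 4) ^+ t.
Proof.
move=> x_ge0 s_ge0 le_x; have b_ge0 := le_trans x_ge0 le_x.
apply: le_trans (lerXn2r 4 _ _ le_x) _; rewrite ?nnegrE //.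
rewrite -(ger0_norm b_ge0) normrM normfV !normrX (ger0_norm s_ge0).
by rewrite exprMn expr_div_n -!exprVn -!exprM !(mulnC t).
Qed.

Theorem lemma2 :
  (exists A : algC, exists N : nat, forall n : nat, (N <= n)%N ->
     forall i : Iirr (Sn n), big_irr i ->
     forall p : 'S_n, `|normchar i p| <= A ^+ tcost p * (sqrtC n%:R) ^- tcost p) ->
  exists C : algC, exists N : nat, forall n : nat, (N <= n)%N ->
     forall i : Iirr (Sn n), big_irr i ->
     \sum_(p : 'S_n) `|normchar i p| ^+ 4 <= C * sqrtC n%:R.
Proof.
case=> A [N char_bound].
pose K := Num.Def.archi_bound (`|A| ^+ 4).
have AK : `|A| ^+ 4 <= K%:R by apply/ltW/archi_boundP/exprn_ge0.
exists (4 ^ K)%:R, (maxn N 1) => n; rewrite geq_max => /andP[nN n_gt0] i big_i.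
set s := sqrtC n%:R; set y : algC := K%:R / n%:R ^+ 2.
have nR : 0 < n%:R :> algC by rewrite ltr0n.
have s_ge1 : 1 <= s by rewrite -sqrtC1 ler_sqrtC ?nnegrE ?ler1n ?ler0n.
have y_ge0 : 0 <= y by rewrite divr_ge0 ?exprn_ge0 ?ltW.
have term_le p : `|normchar i p| ^+ 4 <= y ^+ tcost p.
  have s4 : s ^+ 4 = n%:R ^+ 2 by rewrite -[4%N]/(2 * 2)%N exprM sqrtCK.
  apply: le_trans (expr4_le_of_le _ _ (char_bound n nN i big_i p)) _; rewrite ?sqrtC_ge0 ?ler0n //.
  rewrite s4; apply: lerXn2r; rewrite ?nnegrE //; last by rewrite ler_pM2r ?invr_gt0 ?exprn_gt0.
  by apply: divr_ge0; apply: exprn_ge0; [exact: normr_ge0 | exact: ltW].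
have sum_cycles : \sum_(p : 'S_n) y ^+ tcost p = \prod_(j < n) (1 + j%:R * y).
  rewrite -[n in RHS]card_ord -cardsT -sum_perm_on_transp_length.
  apply: eq_big => [p|p _]; last by rewrite /tcost transp_lengthE.
  by apply/esym; apply/subsetP => x; rewrite inE.
apply: le_trans (ler_sum _ (fun p _ => term_le p)) _.
rewrite sum_cycles; apply: le_trans (prod_1DnatM_div_le_pow4 _ K n_gt0) _.
by rewrite ler_peMr ?ler0n.
Qed.
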